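(* Let $\widetilde{C}(\boldsymbol{\theta},\varepsilon)$ denote a noisy cost function at noise level $\varepsilon$, and let $a_1>1$ be a boost factor with perfect access to the noise level $a_1\varepsilon$. Consider a Zero Noise Extrapolation estimator with two noise levels $$C_m(\boldsymbol{\theta})=\frac{A\,\widetilde{C}(\boldsymbol{\theta},\varepsilon)-B\,\widetilde{C}(\boldsymbol{\theta},a_1\varepsilon)}{D}+E,$$ with real constants $A,B,D,E$ independent of $\boldsymbol{\theta}$, $D\ne0$, and ratio $c=A/B$ equal to $a_1$ (Richardson extrapolation), $a_1r(\varepsilon)^{t(\varepsilon)}/r(a_1\varepsilon)^{t(a_1\varepsilon)}$ (exponential extrapolation, with $r,t$ the positive functions of the noise level in the exponential noise model), or $a_1^{-(L+1)}$ (NIBP extrapolation, $L$ being the circuit depth). Assume $C_m$ is estimated from independent estimates of the two noisy costs and that the variance of the boosted-noise estimate is never smaller than that of the base-noise estimate, so that the error mitigation cost satisfies $\gamma\ge(A^2+B^2)/D^2$. Let $\boldsymbol{\theta}_{\varepsilon*}$ be a global minimizer of $\widetilde{C}(\cdot,\varepsilon)$ over the accessible parameters, let $\langle\cdot\rangle_i$ denote the average over accessible parameter vectors $\boldsymbol{\theta}_i$, write $\Delta\widetilde{C}(\boldsymbol{\theta}_{i,\varepsilon*},x)=\widetilde{C}(\boldsymbol{\theta}_i,x)-\widetilde{C}(\boldsymbol{\theta}_{\varepsilon*},x)$, $\Delta C_m(\boldsymbol{\theta}_{i,\varepsilon*})=C_m(\boldsymbol{\theta}_i)-C_m(\boldsymbol{\theta}_{\varepsilon*})$,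 assume $\langle\Delta\widetilde{C}(\boldsymbol{\theta}_{i,\varepsilon*},\varepsilon)\rangle_i\neq0$, and set $$z=\frac{\langle\Delta\widetilde{C}(\boldsymbol{\theta}_{i,\varepsilon*},a_1\varepsilon)\rangle_i}{\langle\Delta\widetilde{C}(\boldsymbol{\theta}_{i,\varepsilon*},\varepsilon)\rangle_i}.$$ Then the average relative resolvability satisfies $$\overline{\chi}\le\frac{(z-c)^2}{c^2+1}.$$ Consequently, if $z\le1$ and $\langle\Delta\widetilde{C}(\boldsymbol{\theta}_{i,\varepsilon*},a_1\varepsilon)\rangle_i\ge0$, then $\overline{\chi}\le1$ for each of the three extrapolation strategies.
   Context: The average relative resolvability is $\overline{\chi}=\frac{1}{\gamma}\Big(\frac{\langle\Delta C_m(\boldsymbol{\theta}_{i,\varepsilon*})\rangle_i}{\langle\Delta\widetilde{C}(\boldsymbol{\theta}_{i,\varepsilon*},\varepsilon)\rangle_i}\Big)^2$, where $\gamma$ is the error mitigation cost, i.e. the ratio of the variance of the mitigated estimate to the variance of the unmitigated noisy estimate. *)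

From HB Require Import structures.
From mathcomp Require Import all_boot all_order all_algebra.
From mathcomp Require Import reals exp.
Set Implicit Arguments. Unset Strict Implicit. Unset Printing Implicit Defensive.
Import Order.TTheory GRing.Theory Num.Theory.
Local Open Scope ring_scope.

Section ZNE.
Variable R : realType.

Inductive zne_strategy :=
  | Richardson
  | Exponential of (R -> R) & (R -> R)  (* r, t : positive functions of noise level *)
  | NIBP of nat.                        (* circuit depth L *)

Definition strategy_ok (s : zne_strategy) : Prop :=
  match s with
  | Exponential r t => forall x, 0 < r x /\ 0 < t x
  | _ => True
  end.

Definition ratio_c (s : zne_strategy) (a1 eps : R) : R :=
  match s with
  | Richardson => a1
  | Exponential r t =>
      a1 * (r eps `^ t eps) / (r (a1 * eps) `^ t (a1 * eps))
  | NIBP L => a1 ^- L.+1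
  end.

Definition avg (T : finType) (f : T -> R) : R := (\sum_(i : T) f i) / #|T|%:R.

Definition Cm (T : Type) (Ct : T -> R -> R) (A B D E a1 eps : R) (th : T) : R :=
  (A * Ct th eps - B * Ct th (a1 * eps)) / D + E.

Definition Delta (T : Type) (f : T -> R) (ths th : T) : R := f th - f ths.

(* Error mitigation cost: Var(mitigated estimate) / Var(unmitigated noisy estimate),
   where the mitigated estimate is built from independent estimates of the two
   noisy costs with variances v1 (base noise) and v2 (boosted noise). *)
Definition mitigation_cost (A B D v1 v2 : R) : R :=
  ((A ^+ 2 * v1 + B ^+ 2 * v2) / D ^+ 2) / v1.

Definition chibar (gamma num den : R) : R := gamma^-1 * (num / den) ^+ 2.

End ZNE.

From HB Require Import structures.
From mathcomp Require Import all_boot all_order all_algebra.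
From mathcomp Require Import reals exp.
From mathcomp Require Import ring lra.
Import Order.TTheory GRing.Theory Num.Theory.
Local Open Scope ring_scope.

(* The constant E cancels in differences, so by linearity of the average the
   mitigated cost difference is (A dC1 - B dC2) / D and its ratio to dC1 is
   (A - B z) / D.  Since gamma >= (A^2 + B^2) / D^2, the squared ratio divided
   by gamma is at most (A - B z)^2 / (A^2 + B^2) = (z - c)^2 / (c^2 + 1).
   Finally (z - c)^2 <= c^2 + 1 amounts to z^2 <= 1 + 2 z c, which holds for
   0 <= z <= 1 and c >= 0; all three strategies have c > 0. *)

Section Average.
Variables (R : realType) (T : finType).

Lemma avg_ge0 (f : T -> R) : (forall i, 0 <= f i) -> 0 <= avg f.
Proof. by move=> f_ge0; rewrite divr_ge0 // sumr_ge0. Qed.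

Lemma avg_lincomb (f g : T -> R) (a b d : R) :
  avg (fun i => (a * f i - b * g i) / d) = (a * avg f - b * avg g) / d.
Proof. by rewrite /avg -mulr_suml sumrB -!mulr_sumr; ring. Qed.

Lemma avg_Delta_Cm (Ct : T -> R -> R) (A B D E a1 eps : R) (ths : T) :
  avg (Delta (Cm Ct A B D E a1 eps) ths) =
  (A * avg (Delta (fun x => Ct x eps) ths)
   - B * avg (Delta (fun x => Ct x (a1 * eps)) ths)) / D.
Proof.
rewrite -avg_lincomb /avg; congr (_ / _); apply: eq_bigr => th _.
by rewrite /Delta /Cm; ring.
Qed.

End Average.

Lemma mitigation_cost_ge {R : realType} (A B D : R) {v1 v2 : R} :
  0 < v1 -> v1 <= v2 -> (A ^+ 2 + B ^+ 2) / D ^+ 2 <= mitigation_cost A B D v1 v2.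
Proof.
move=> v1_gt0 v12.
have -> : mitigation_cost A B D v1 v2 = (A ^+ 2 + B ^+ 2 * (v2 / v1)) / D ^+ 2.
  by rewrite /mitigation_cost mulrAC mulrDl mulfK ?gt_eqF // mulrA.
rewrite ler_wpM2r ?invr_ge0 ?sqr_ge0 // lerD2l ler_peMr ?sqr_ge0 //.
by rewrite ler_pdivlMr // mul1r.
Qed.

Lemma chibar_le_cost {R : realType} {gamma0 gamma : R} (num den : R) :
  0 < gamma0 -> gamma0 <= gamma -> chibar gamma num den <= chibar gamma0 num den.
Proof.
move=> gamma0_gt0 le_gamma.
by rewrite ler_wpM2r ?sqr_ge0 // lef_pV2 // posrE (lt_le_trans gamma0_gt0).
Qed.

Lemma sqrB_div_sqrD_ratio {R : realFieldType} (A B z : R) : B != 0 ->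
  (A - B * z) ^+ 2 / (A ^+ 2 + B ^+ 2) = (z - A / B) ^+ 2 / ((A / B) ^+ 2 + 1).
Proof.
move=> B_neq0.
have AB_gt0 : 0 < A ^+ 2 + B ^+ 2 by rewrite ltr_wpDl ?sqr_ge0 ?exprn_even_gt0.
have c_gt0 : 0 < (A / B) ^+ 2 + 1 by rewrite ltr_wpDl ?sqr_ge0.
by field; rewrite B_neq0 !gt_eqF.
Qed.

Lemma resolvability_le {R : realType} (A B D x y gamma : R) :
  D != 0 -> B != 0 -> x != 0 -> (A ^+ 2 + B ^+ 2) / D ^+ 2 <= gamma ->
  chibar gamma ((A * x - B * y) / D) x <= (y / x - A / B) ^+ 2 / ((A / B) ^+ 2 + 1).
Proof.
move=> D_neq0 B_neq0 x_neq0 le_gamma.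
have AB_gt0 : 0 < A ^+ 2 + B ^+ 2.
  by rewrite ltr_wpDl ?sqr_ge0 ?exprn_even_gt0.
have gamma0_gt0 : 0 < (A ^+ 2 + B ^+ 2) / D ^+ 2.
  by rewrite divr_gt0 ?exprn_even_gt0.
apply: (le_trans (chibar_le_cost _ _ gamma0_gt0 le_gamma)).
have -> : chibar ((A ^+ 2 + B ^+ 2) / D ^+ 2) ((A * x - B * y) / D) x =
          (A - B * (y / x)) ^+ 2 / (A ^+ 2 + B ^+ 2).
  by rewrite /chibar; field; rewrite D_neq0 x_neq0 gt_eqF.
by rewrite sqrB_div_sqrD_ratio.
Qed.

Lemma ratio_c_gt0 {R : realType} (s : zne_strategy R) (a1 eps : R) :
  0 < a1 -> strategy_ok s -> 0 < ratio_c s a1 eps.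
Proof.
case: s => [|r t|L] /= a1_gt0 s_ok //; last by rewrite invr_gt0 exprn_gt0.
have [r_gt0 _] := s_ok eps; have [r'_gt0 _] := s_ok (a1 * eps).
by rewrite divr_gt0 ?mulr_gt0 ?powR_gt0.
Qed.

Lemma sqr_sub_ratio_le1 {R : realFieldType} (c z : R) :
  0 <= c -> 0 <= z -> z <= 1 -> (z - c) ^+ 2 / (c ^+ 2 + 1) <= 1.
Proof.
move=> c_ge0 z_ge0 z_le1; have c2_ge0 := sqr_ge0 c.
rewrite ler_pdivrMr ?mul1r; last by lra.
rewrite sqrrB !expr2; nra.
Qed.

Theorem proposition2 (R : realType) (Theta : finType) (Ct : Theta -> R -> R)
  (eps a1 A B D E v1 v2 : R) (s : zne_strategy R) (ths : Theta) :
  0 < eps -> 1 < a1 -> D != 0 -> B != 0 ->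
  strategy_ok s -> A / B = ratio_c s a1 eps ->
  0 < v1 -> v1 <= v2 ->
  (forall th, Ct ths eps <= Ct th eps) ->
  avg (fun th => Delta (fun x => Ct x eps) ths th) != 0 ->
  let dC1 := avg (fun th => Delta (fun x => Ct x eps) ths th) in
  let dC2 := avg (fun th => Delta (fun x => Ct x (a1 * eps)) ths th) in
  let dCm := avg (fun th => Delta (Cm Ct A B D E a1 eps) ths th) in
  let gamma := mitigation_cost A B D v1 v2 in
  let c := A / B in
  let z := dC2 / dC1 in
  chibar gamma dCm dC1 <= (z - c) ^+ 2 / (c ^+ 2 + 1) /\
  (z <= 1 -> 0 <= dC2 -> chibar gamma dCm dC1 <= 1).
Proof.
move=> _ a1_gt1 D_neq0 B_neq0 s_ok c_def v1_gt0 v12 ths_min dC1_neq0.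
move=> dC1 dC2 dCm gamma c z.
have chi_le : chibar gamma dCm dC1 <= (z - c) ^+ 2 / (c ^+ 2 + 1).
  rewrite /dCm avg_Delta_Cm.
  exact: resolvability_le D_neq0 B_neq0 dC1_neq0 (mitigation_cost_ge A B D v1_gt0 v12).
split=> // z_le1 dC2_ge0; apply: (le_trans chi_le).
have dC1_gt0 : 0 < dC1.
  by rewrite lt_def dC1_neq0 avg_ge0 // => th; rewrite /Delta subr_ge0 ths_min.
have c_gt0 : 0 < c by rewrite /c c_def ratio_c_gt0 // (lt_trans ltr01).
have z_ge0 : 0 <= z by apply: divr_ge0 => //; exact: ltW.
exact: sqr_sub_ratio_le1 (ltW c_gt0) z_ge0 z_le1.
Qed.
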